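(* Let $G$ be a locally compact abelian group (written additively), let $X$ be a topological vector space over $\mathbf{C}$, and let $J\subseteq G$ be a subsemigroup with non-empty interior such that $G=J-J=\{u-v: u,v\in J\}$. Then for each $n\in\mathbf{Z}_+$ the restriction map $r:P^{n}(G,X)\to P^{n}(J,X)$, $p\mapsto p|_J$, is a linear bijection. In particular, every polynomial $q:J\to X$ has a unique extension to a polynomial $p:G\to X$.
   Context: $\mathbf{Z}_+=\{0,1,2,\dots\}$. For an abelian topological semigroup $S$ (e.g. $J$ or $G$) and a topological vector space $X$, a continuous function $p:S\to X$ is a polynomial of degree at most $n$ if for all $s,t\in S$ there exist $a_0(s,t),\dots,a_n(s,t)\in X$ with $p(s+mt)=\sum_{j=0}^n a_j(s,t)m^j$ for all $m\in\mathbf{Z}_+$ (i.e. $m\mapsto p(s+mt)$ is a polynomial in $m$ of degree at most $n$). $P^n(S,X)$ denotes the space of all such polynomials. *)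

From HB Require Import structures.
From mathcomp Require Import all_boot all_order all_algebra.
From mathcomp Require Import all_classical all_reals all_analysis.
From mathcomp Require Import complex.
Set Implicit Arguments. Unset Strict Implicit. Unset Printing Implicit Defensive.
Import Order.TTheory GRing.Theory Num.Theory.
Local Open Scope classical_set_scope.
Local Open Scope ring_scope.

(* [is_poly n S p]: the restriction of p : G -> X to S is a polynomial of
   degree at most n on S (S a subsemigroup, with the subspace topology):
   p is continuous on S, and for all s, t in S there are a_0..a_n in X with
   p (s + m t) = sum_j a_j m^j for every m in Z_+. *)
Definition is_poly (R : realType) (G : topologicalZmodType)
    (X : topologicalLmodType R[i]) (n : nat) (S : set G) (p : G -> X) : Prop :=
  {within S, continuous p} /\
  forall s t : G, S s -> S t ->
    exists a : 'I_n.+1 -> X,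
      forall m : nat, p (s + t *+ m) = \sum_(j < n.+1) ((m%:R : R[i]) ^+ j) *: a j.

Definition subsemigroup (G : zmodType) (J : set G) : Prop :=
  forall u v, J u -> J v -> J (u + v).

From HB Require Import structures.
From mathcomp Require Import all_boot all_order all_algebra.
From mathcomp Require Import all_classical all_reals all_analysis.
From mathcomp Require Import complex.
Set Implicit Arguments. Unset Strict Implicit. Unset Printing Implicit Defensive.
Import Order.TTheory GRing.Theory Num.Theory.
Local Open Scope classical_set_scope.
Local Open Scope ring_scope.

(* A sequence m |-> f m is a polynomial of degree at most n exactly when its
   (n+1)-st finite difference vanishes; its value at 0 is then a fixed linear
   combination of its values at 1, ..., n+1 (backward extrapolation).
   Given a polynomial q on J and g in G, pick w in J with g + w in J, so that
   g + k w lies in J for all k >= 1, and let p g be the extrapolation of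
   k |-> q (g + k w) to k = 0.  Extrapolating in two shift directions at once
   shows that p g does not depend on w; hence p extends q, is a polynomial
   (write s = us - vs, t = ut - vt and use the shift vs + k vt at s + k t),
   and is the only polynomial extension.  For continuity, one shift W = v + w0
   with w0 interior to J works on a whole neighbourhood of g = u - v, because
   g + k W is interior to J for k >= 1. *)

Section FiniteDifferences.
Variables (K : numFieldType) (X : lmodType K).
Implicit Types (f g : nat -> X) (x : X).

(* [fdiff N f m] is (-1)^N times the N-th forward difference of f at m. *)
Definition fdiff (N : nat) f (m : nat) : X :=
  \sum_(k < N.+1) ((-1) ^+ k * 'C(N, k)%:R) *: f (m + k)%N.

Definition poly_seq (n : nat) f : Prop :=
  exists a : 'I_n.+1 -> X,
    forall m : nat, f m = \sum_(j < n.+1) ((m%:R : K) ^+ j) *: a j.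

Lemma fdiffS N f m : fdiff N.+1 f m = fdiff N (fun k => f k - f k.+1) m.
Proof.
rewrite /fdiff big_ord_recl /= expr0 mul1r bin0 scale1r.
under eq_bigr do rewrite /bump /= binS natrD mulrDr scalerDl.
rewrite big_split /= addrA.
have -> : f (m + 0)%N
      + \sum_(i < N.+1) ((-1) ^+ (1 + i) * 'C(N, i.+1)%:R) *: f (m + (1 + i))%N
    = \sum_(k < N.+1) ((-1) ^+ k * 'C(N, k)%:R) *: f (m + k)%N.
  rewrite [RHS]big_ord_recl /= expr0 mul1r bin0 scale1r.
  congr (_ + _); rewrite big_ord_recr /= bin_small // mulr0 scale0r addr0.
  by apply: eq_bigr => i _; rewrite /bump /=.
rewrite -big_split /=; apply: eq_bigr => i _.
by rewrite add1n exprS mulN1r mulNr scaleNr scalerBr addnS.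
Qed.

Lemma fdiff_sum N M (F : 'I_M -> nat -> X) m :
  fdiff N (fun k => \sum_(i < M) F i k) m = \sum_(i < M) fdiff N (F i) m.
Proof. by rewrite /fdiff; under eq_bigr do rewrite scaler_sumr; exact: exchange_big. Qed.

Lemma fdiff_monomial N j x m :
  (j < N)%N -> fdiff N (fun k => (k%:R : K) ^+ j *: x) m = 0.
Proof.
elim: N j x m => [//|N IHN] j x m ltjN.
have binomial_step : (fun k => (k%:R : K) ^+ j *: x - (k.+1%:R) ^+ j *: x)
    = (fun k => \sum_(i < j) (k%:R : K) ^+ i *: - (x *+ 'C(j, i))).
  apply/funext => k; rewrite -natr1 exprD1n big_ord_recr /= binn mulr1n scalerDl.
  rewrite opprD addrCA subrr addr0 scaler_suml -sumrN; apply: eq_bigr => i _.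
  by rewrite -scalerMnl scalerN scalerMnr.
rewrite fdiffS binomial_step.
rewrite (fdiff_sum _ (fun i k => (k%:R : K) ^+ i *: - (x *+ 'C(j, i)))).
by rewrite big1 // => i _; apply: IHN; exact: leq_trans (ltn_ord i) _.
Qed.

Lemma poly_seq_fdiff n f : poly_seq n f -> forall m, fdiff n.+1 f m = 0.
Proof.
move=> [a Ef] m; rewrite (_ : f = fun k => \sum_(j < n.+1) (k%:R : K) ^+ j *: a j).
  by rewrite fdiff_sum big1 // => j _; exact: fdiff_monomial.
exact/funext.
Qed.

Lemma fdiff_eq0_eq N f g :
    (forall m, fdiff N.+1 f m = 0) -> (forall m, fdiff N.+1 g m = 0) ->
  (forall i, (i <= N)%N -> f i = g i) -> forall m, f m = g m.
Proof.
move=> Df Dg Efg; elim/ltn_ind => m IHm.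
have [/Efg //|ltNm] := leqP m N.
rewrite -(subnK ltNm); set m0 := (m - N.+1)%N.
pose S (h : nat -> X) : X := \sum_(k < N.+1) ((-1) ^+ k * 'C(N.+1, k)%:R) *: h (m0 + k)%N.
have fdiff_last h : fdiff N.+1 h m0 = S h + (-1) ^+ N.+1 *: h (m0 + N.+1)%N.
  by rewrite /fdiff big_ord_recr /= binn mulr1.
have Sfg : S f = S g.
  apply: eq_bigr => k _; rewrite IHm //.
  by rewrite -[X in (_ < X)%N](subnK ltNm) ltn_add2l.
move: (Df m0) (Dg m0); rewrite !fdiff_last Sfg => Ef Eg.
apply: (scalerI (a := (-1) ^+ N.+1)); first by rewrite signr_eq0.
by apply: (addrI (S g)); rewrite Ef Eg.
Qed.

Lemma interpolation_exists n f : exists a : 'I_n.+1 -> X,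
  forall i : 'I_n.+1, f i = \sum_(j < n.+1) ((i%:R : K) ^+ j) *: a j.
Proof.
pose V : 'M[K]_n.+1 := \matrix_(i, j) ((i : nat)%:R ^+ j).
have unitV : V \in unitmx.
  have -> : V = (Vandermonde n.+1 (\row_(j < n.+1) ((j : nat)%:R : K)))^T.
    by apply/matrixP => i j; rewrite !mxE.
  rewrite unitmxE det_tr det_Vandermonde unitfE.
  apply/prodf_neq0 => i _; apply/prodf_neq0 => j ltij.
  by rewrite !mxE subr_eq0 eqr_nat neq_ltn ltij orbT.
exists (fun j => \sum_(i < n.+1) invmx V j i *: f i) => i.
under eq_bigr do rewrite scaler_sumr.
rewrite exchange_big /=.
under eq_bigr do (under eq_bigr do rewrite scalerA; rewrite -scaler_suml).
have VW k : \sum_(j < n.+1) (i%:R : K) ^+ j * invmx V j k = (V *m invmx V) i k.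
  by rewrite !mxE; apply: eq_bigr => j _; rewrite mxE.
under eq_bigr do rewrite VW.
rewrite mulmxV // (bigD1 i) //= big1 ?addr0; first by rewrite mxE eqxx scale1r.
by move=> k neqki; rewrite mxE eq_sym (negbTE neqki) scale0r.
Qed.

Lemma fdiff_eq0_poly_seq n f : (forall m, fdiff n.+1 f m = 0) -> poly_seq n f.
Proof.
move=> Df; have [a Ea] := interpolation_exists n f; exists a.
pose g m := \sum_(j < n.+1) (m%:R : K) ^+ j *: a j.
apply: (@fdiff_eq0_eq n f g Df) => [|i leni]; first by apply: poly_seq_fdiff; exists a.
exact: (Ea (@Ordinal n.+1 i leni)).
Qed.

Definition extrapolation (n : nat) f : X :=
  \sum_(k < n.+1) ((-1) ^+ k * 'C(n.+1, k.+1)%:R) *: f k.+1.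

Lemma fdiff_eq0_extrapolation n f : fdiff n.+1 f 0 = 0 -> f 0%N = extrapolation n f.
Proof.
rewrite /fdiff big_ord_recl /= expr0 bin0 mul1r scale1r => /eqP.
rewrite addr_eq0 => /eqP ->; rewrite -sumrN; apply: eq_bigr => k _.
by rewrite exprS mulN1r mulNr scaleNr opprK.
Qed.

Lemma poly_seq_extrapolation n f : poly_seq n f -> f 0%N = extrapolation n f.
Proof. by move=> /poly_seq_fdiff fdiff0; exact: fdiff_eq0_extrapolation. Qed.

Lemma eq_extrapolation n f g :
  (forall k, f k.+1 = g k.+1) -> extrapolation n f = extrapolation n g.
Proof. by move=> Efg; apply: eq_bigr => k _; rewrite Efg. Qed.

Lemma extrapolation_eq0 n f : (forall k, f k.+1 = 0) -> extrapolation n f = 0.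
Proof. by move=> f0; apply: big1 => k _; rewrite f0 scaler0. Qed.

Lemma extrapolation_sum n M (d : 'I_M -> K) (F : 'I_M -> nat -> X) :
  \sum_(i < M) d i *: extrapolation n (F i)
    = extrapolation n (fun k => \sum_(i < M) d i *: F i k).
Proof.
rewrite /extrapolation; under eq_bigr do rewrite scaler_sumr.
rewrite exchange_big /=; apply: eq_bigr => k _; rewrite scaler_sumr.
by apply: eq_bigr => i _; rewrite !scalerA mulrC.
Qed.

Lemma extrapolation_swap n (F : nat -> nat -> X) :
  extrapolation n (fun l => extrapolation n (F l))
    = extrapolation n (fun k => extrapolation n (fun l => F l k)).
Proof.
rewrite /extrapolation; under eq_bigr do rewrite scaler_sumr.
rewrite exchange_big /=; apply: eq_bigr => k _; rewrite scaler_sumr.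
by apply: eq_bigr => l _; rewrite !scalerA mulrC.
Qed.

End FiniteDifferences.

Section Subsemigroup.
Variables (G : zmodType) (J : set G).
Hypothesis semiJ : subsemigroup J.

Lemma subsemigroupDMn a b k : J a -> J b -> J (a + b *+ k).
Proof.
move=> Ja Jb; elim: k => [|k IHk]; first by rewrite mulr0n addr0.
by rewrite mulrSr addrA; exact: semiJ.
Qed.

Lemma subsemigroup_shiftS g w k : J w -> J (g + w) -> J (g + w *+ k.+1).
Proof. by move=> Jw Jgw; rewrite mulrS addrA; exact: subsemigroupDMn. Qed.

End Subsemigroup.

Lemma exists_shift_into (G : zmodType) (J : set G) :
  (forall g : G, exists u v, J u /\ J v /\ g = u - v) ->
  forall g, exists w, J w /\ J (g + w).
Proof.
by move=> diffJ g; have [u [v [Ju [Jv ->]]]] := diffJ g; exists v; rewrite subrK.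
Qed.

Section Extrapolates.
Variables (K : numFieldType) (X : lmodType K) (G : zmodType) (n : nat).

Definition poly_on (S : set G) (p : G -> X) : Prop :=
  forall s t, S s -> S t -> poly_seq n (fun m => p (s + t *+ m)).

Lemma poly_on_extrapolation S q s t : poly_on S q -> S s -> S t ->
  q s = extrapolation n (fun k => q (s + t *+ k)).
Proof.
move=> polyq Ss St; have := poly_seq_extrapolation (polyq _ _ Ss St).
by rewrite /= mulr0n addr0.
Qed.

Variable J : set G.
Hypothesis semiJ : subsemigroup J.
Hypothesis diffJ : forall g : G, exists u v, J u /\ J v /\ g = u - v.

Definition extrapolates (q p : G -> X) : Prop :=
  forall g w, J w -> J (g + w) -> p g = extrapolation n (fun k => q (g + w *+ k)).

Section PolyOnJ.
Variable q : G -> X.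
Hypothesis polyq : poly_on J q.

Lemma extrapolation_refine g v w : J v -> J (g + v) -> J w ->
  extrapolation n (fun l => q (g + v *+ l))
    = extrapolation n (fun l => extrapolation n (fun k => q (g + v *+ l + w *+ k))).
Proof.
move=> Jv Jgv Jw; apply: eq_extrapolation => l.
by apply: (poly_on_extrapolation polyq) Jw; exact: subsemigroup_shiftS.
Qed.

Lemma extrapolation_shift_indep g v w : J v -> J (g + v) -> J w -> J (g + w) ->
  extrapolation n (fun k => q (g + v *+ k)) = extrapolation n (fun k => q (g + w *+ k)).
Proof.
move=> Jv Jgv Jw Jgw.
rewrite (extrapolation_refine Jv Jgv Jw) (extrapolation_refine Jw Jgw Jv).
by rewrite extrapolation_swap; do 2 apply: eq_extrapolation => ?; rewrite addrAC.
Qed.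

Lemma extrapolates_exists : exists p, extrapolates q p.
Proof.
have [w Jw] := choice (exists_shift_into diffJ).
exists (fun g => extrapolation n (fun k => q (g + w g *+ k))) => g v Jv Jgv.
by have [Jwg Jgwg] := Jw g; exact: extrapolation_shift_indep.
Qed.

Lemma extrapolates_eq_on p : extrapolates q p -> forall x, J x -> p x = q x.
Proof.
move=> extp x Jx; have [w [Jw Jxw]] := exists_shift_into diffJ x.
by rewrite (extp _ _ Jw Jxw) -(poly_on_extrapolation polyq).
Qed.

Lemma extrapolates_fdiff p : extrapolates q p ->
  forall s t, fdiff n.+1 (fun m => p (s + t *+ m)) 0 = 0.
Proof.
move=> extp s t.
have [us [vs [Jus [Jvs ->]]]] := diffJ s; have [ut [vt [Jut [Jvt ->]]]] := diffJ t.
have shift_identity k l : us - vs + (ut - vt) *+ k + (vs + vt *+ k) *+ l.+1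
    = us + vs *+ l + (ut + vt *+ l) *+ k.
  rewrite mulrnBl !mulrnDl -mulrnA mulnS mulrnDr -mulrnA mulnC mulrS.
  by rewrite [LHS]addrACA !addrA !subrK.
have shifted k : p (us - vs + (ut - vt) *+ k)
    = extrapolation n (fun l => q (us - vs + (ut - vt) *+ k + (vs + vt *+ k) *+ l)).
  apply: extp; first exact: subsemigroupDMn.
  by rewrite mulrnBl addrACA !subrK; exact: subsemigroupDMn.
rewrite /fdiff; under eq_bigr do rewrite add0n shifted.
rewrite extrapolation_sum; apply: extrapolation_eq0 => l.
under eq_bigr do rewrite shift_identity.
have polyB := polyq (subsemigroupDMn semiJ l Jus Jvs) (subsemigroupDMn semiJ l Jut Jvt).
by rewrite -[RHS](poly_seq_fdiff polyB 0); apply: eq_bigr => k _; rewrite add0n.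
Qed.

Lemma extrapolates_poly_on p : extrapolates q p -> poly_on [set: G] p.
Proof.
move=> extp s t _ _; apply: fdiff_eq0_poly_seq => m.
rewrite -(extrapolates_fdiff extp (s + t *+ m) t).
by apply: eq_bigr => k _; rewrite add0n mulrnDr addrA.
Qed.

End PolyOnJ.

Lemma extrapolates_unique q p1 p2 : extrapolates q p1 -> extrapolates q p2 -> p1 = p2.
Proof.
move=> extp1 extp2; apply/funext => g; have [w [Jw Jgw]] := exists_shift_into diffJ g.
by rewrite (extp1 _ _ Jw Jgw) (extp2 _ _ Jw Jgw).
Qed.

Lemma eq_extrapolates q1 q2 p : (forall x, J x -> q1 x = q2 x) ->
  extrapolates q1 p -> extrapolates q2 p.
Proof.
move=> Eq extp g w Jw Jgw; rewrite (extp _ _ Jw Jgw); apply: eq_extrapolation => k.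
by apply: Eq; exact: subsemigroup_shiftS.
Qed.

Lemma poly_extrapolates p : poly_on [set: G] p -> extrapolates p p.
Proof. by move=> polyp g w _ _; exact: poly_on_extrapolation polyp I I. Qed.

End Extrapolates.

Lemma translation_continuous (G : topologicalZmodType) (c : G) :
  continuous (fun z => z + c).
Proof.
move=> z; apply: (@continuous2_cvg _ _ _ _ _ _ id (fun=> c) +%R z c).
- exact: (add_continuous (z, c)).
- exact: cvg_id.
- exact: cvg_cst.
Qed.

Section SubsemigroupInterior.
Variables (G : topologicalZmodType) (J : set G).
Hypothesis semiJ : subsemigroup J.

Lemma subsemigroup_interiorD x y : interior J x -> J y -> interior J (x + y).
Proof.
move=> intJx Jy; rewrite /interior.
have shift : (fun z => z + - y) @ nbhs (x + y) --> x.
  by move: (@translation_continuous _ (- y) (x + y)); rewrite /continuous_at /= addrK.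
have := shift _ intJx; rewrite /= nbhs_simpl /=.
by apply: filterS => z Jzy; rewrite -(subrK y z); exact: semiJ.
Qed.

Lemma subsemigroup_interiorDMn x y k : interior J x -> J y -> interior J (x + y *+ k).
Proof.
move=> intJx Jy; elim: k => [|k IHk]; first by rewrite mulr0n addr0.
by rewrite mulrSr addrA; exact: subsemigroup_interiorD.
Qed.

End SubsemigroupInterior.

Lemma cvg_lincomb (K : numFieldType) (X : topologicalLmodType K) (T : Type)
    (F : set_system T) {FF : Filter F} M (c : nat -> K) (f : nat -> T -> X) (l : nat -> X) :
  (forall i, f i @ F --> l i) ->
  (fun x => \sum_(i < M) c i *: f i x) @ F --> \sum_(i < M) c i *: l i.
Proof.
move=> fl; elim: M => [|M IHM].
  by rewrite big_ord0; under eq_fun do rewrite big_ord0; exact: cvg_cst.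
rewrite big_ord_recr /=; under eq_fun do rewrite big_ord_recr /=.
apply: (@continuous2_cvg _ _ _ _ _ _ (fun x => \sum_(i < M) c i *: f i x)
  (fun x => c M *: f M x) +%R) => //; first exact: (add_continuous (_, _)).
apply: (@continuous2_cvg _ K^o _ _ _ _ (fun=> c M) (f M) *:%R) => //.
  exact: (scale_continuous (_, _)).
exact: cvg_cst.
Qed.

Lemma extrapolates_continuous (K : numFieldType) (X : topologicalLmodType K)
    (G : topologicalZmodType) (n : nat) (J : set G) (q p : G -> X) :
    subsemigroup J -> interior J !=set0 ->
    (forall g : G, exists u v, J u /\ J v /\ g = u - v) ->
  {within J, continuous q} -> extrapolates n J q p -> continuous p.
Proof.
move=> semiJ [w0 intJw0] diffJ contq extp g.
have [u [v [Ju [Jv ->]]]] := diffJ g.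
pose W := v + w0; have JW : J W := semiJ _ _ Jv (interior_subset intJw0).
have gW : u - v + W = w0 + u by rewrite addrA subrK addrC.
have intJ k : interior J (u - v + W *+ k.+1).
  rewrite mulrS addrA gW; apply: subsemigroup_interiorDMn => //.
  exact: subsemigroup_interiorD.
have near_p : \forall x \near u - v, extrapolation n (fun k => q (x + W *+ k)) = p x.
  have near_J : \forall x \near u - v, J (x + W).
    by have := intJ 0%N; rewrite mulr1n; exact: (@translation_continuous _ W).
  by apply: filterS near_J => x JxW; rewrite (extp _ _ JW JxW).
apply: cvg_trans (near_eq_cvg near_p) _.
rewrite (extp _ _ JW (interior_subset (intJ 0%N))).
apply: (@cvg_lincomb K X G (nbhs (u - v)) _ n.+1
  (fun k => (-1) ^+ k * 'C(n.+1, k.+1)%:R) (fun k x => q (x + W *+ k.+1))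
  (fun k => q (u - v + W *+ k.+1))) => k.
apply: (@continuous_comp _ _ _ (fun x => x + W *+ k.+1) q).
  exact: translation_continuous.
have := contq (u - v + W *+ k.+1).
by rewrite /continuous_at -(nbhs_subspace_interior (intJ k)).
Qed.

Theorem theorem1p5 (R : realType) (G : topologicalZmodType)
    (X : topologicalLmodType R[i]) (J : set G)
    (hG_lc : locally_compact [set: G]) (hG_T2 : hausdorff_space G)
    (hJ_semi : subsemigroup J) (hJ_int : interior J !=set0)
    (hJ_gen : forall g : G, exists u v, J u /\ J v /\ g = u - v)
    (n : nat) :
  (forall p : G -> X, is_poly n [set: G] p -> is_poly n J p) /\
  (forall q : G -> X, is_poly n J q ->
     exists p : G -> X, is_poly n [set: G] p /\ (forall x, J x -> p x = q x)) /\
  (forall p1 p2 : G -> X, is_poly n [set: G] p1 -> is_poly n [set: G] p2 ->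
     (forall x, J x -> p1 x = p2 x) -> p1 = p2).
Proof.
split; [|split].
- move=> p [contp polyp]; split; last by move=> s t _ _; exact: polyp.
  exact: continuous_subspaceW contp.
- move=> q [contq polyq]; have [p extp] := extrapolates_exists hJ_semi hJ_gen polyq.
  exists p; split; [split|].
  + exact/continuous_subspaceT/(extrapolates_continuous hJ_semi hJ_int hJ_gen contq extp).
  + exact: extrapolates_poly_on extp.
  + exact: extrapolates_eq_on extp.
- move=> p1 p2 [_ poly1] [_ poly2] E12.
  apply: (extrapolates_unique hJ_gen (poly_extrapolates poly1)).
  exact (eq_extrapolates hJ_semi (fun x Jx => esym (E12 x Jx)) (poly_extrapolates poly2)).
Qed.
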